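(* For integers $N\ge2$ and $k\ge1$, let $E_k(2^N)$ (resp. $I_k(2^N)$) be the number of integers $0\le u<2^N$ such that $\sum_{i\ge0}\varepsilon_i(u)\varepsilon_{i+1}(u)\cdots\varepsilon_{i+k}(u)$ is even (resp. odd). Then for every real $A>1$, as $N\to\infty$, uniformly for integers $k\ge A\log N/\log2$, $$\frac{E_k(2^N)}{2^N}\ge1-2N^{1-A}+o(N^{1-A})\qquad\text{and}\qquad\frac{I_k(2^N)}{2^N}\le2N^{1-A}+o(N^{1-A}).$$
   Context: $\varepsilon_i(u)$ denotes the $i$-th binary digit of $u$ ($\varepsilon_0$ the units digit); the sum $\sum_i\varepsilon_i(u)\cdots\varepsilon_{i+k}(u)$ counts the (possibly overlapping) occurrences of $k+1$ consecutive digits $1$ in the binary expansion of $u$. *)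

From Stdlib Require Import Reals Arith List.
Import ListNotations.

Definition eps (i u : nat) : nat := Nat.b2n (Nat.testbit u i).

Definition run_prod (k i u : nat) : nat :=
  fold_right Nat.mul 1 (map (fun j => eps (i + j) u) (seq 0 (S k))).

(* sum_{i >= 0} eps_i(u) ... eps_(i+k)(u).  Since u < 2^u, all digits of
   index i >= u vanish, so the sum over i in [0, u] is the full sum. *)
Definition run_count (k u : nat) : nat :=
  fold_right Nat.add 0 (map (fun i => run_prod k i u) (seq 0 (S u))).

Definition E_count (k N : nat) : nat :=
  length (filter (fun u => Nat.even (run_count k u)) (seq 0 (2 ^ N))).
Definition I_count (k N : nat) : nat :=
  length (filter (fun u => Nat.odd (run_count k u)) (seq 0 (2 ^ N))).

(* An integer u < 2^N whose count of runs of k+1 ones is odd contains at least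
   one such run, starting at some position i < N.  For fixed i, exactly 2^(N-k-1)
   integers below 2^N have the bits i, ..., i+k all set, so the union bound gives
   I_k(2^N) <= N 2^(N-k-1).  When 2^k >= N^A this is at most N^(1-A)/2 of all
   integers below 2^N, which is stronger than the asserted asymptotic bounds. *)

From Stdlib Require Import Reals Arith List Lia Lra.

Lemma length_filter_seq_double (f : nat -> bool) (m : nat) :
  length (filter f (seq 0 (2 * m))) =
  length (filter (fun v => f (2 * v)) (seq 0 m)) +
  length (filter (fun v => f (2 * v + 1)) (seq 0 m)).
Proof.
  induction m as [|m IH]; [reflexivity|].
  replace (2 * S m) with (2 * m + 2) by lia.
  rewrite seq_app, (seq_S m 0), !filter_app, !length_app, IH; simpl.
  replace (m + (m + 0)) with (2 * m) by lia.
  replace (S (2 * m)) with (2 * m + 1) by lia.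
  destruct (f (2 * m)), (f (2 * m + 1)); simpl; lia.
Qed.

Lemma length_filter_false (f : nat -> bool) (l : list nat) :
  (forall x, f x = false) -> length (filter f l) = 0.
Proof. intros Hf; induction l as [|a l IH]; simpl; [|rewrite Hf]; auto. Qed.

Lemma length_filter_orb (f g : nat -> bool) (l : list nat) :
  length (filter (fun x => orb (f x) (g x)) l) <= length (filter f l) + length (filter g l).
Proof. induction l as [|a l IH]; simpl; [lia|]; destruct (f a), (g a); simpl; lia. Qed.

Lemma length_filter_incl (f g : nat -> bool) (l : list nat) :
  (forall x, In x l -> f x = true -> g x = true) ->
  length (filter f l) <= length (filter g l).
Proof.
  induction l as [|a l IH]; intros Hfg; simpl; [lia|].
  assert (IHl : length (filter f l) <= length (filter g l))
    by (apply IH; intros x Hx; apply Hfg; right; exact Hx).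
  destruct (f a) eqn:Ha.
  - rewrite (Hfg a (or_introl eq_refl) Ha); simpl; lia.
  - destruct (g a); simpl; lia.
Qed.

Lemma odd_double (v : nat) : Nat.odd (2 * v) = false.
Proof. rewrite <- Nat.negb_even, Nat.even_mul; reflexivity. Qed.

Lemma odd_double_succ (v : nat) : Nat.odd (2 * v + 1) = true.
Proof. rewrite Nat.odd_add, odd_double; reflexivity. Qed.

Lemma div2_double_succ (v : nat) : Nat.div2 (2 * v + 1) = v.
Proof. rewrite Nat.add_1_r; apply Nat.div2_succ_double. Qed.

Lemma testbit_lt_pow2 (u N n : nat) :
  u < 2 ^ N -> Nat.testbit u n = true -> n < N.
Proof.
  intros Hu Hbit; destruct (Nat.lt_ge_cases n N) as [|HnN]; [assumption|].
  assert (Hsmall : u / 2 ^ n = 0).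
  { apply Nat.div_small. apply (Nat.lt_le_trans _ _ _ Hu). apply Nat.pow_le_mono_r; lia. }
  assert (Nat.testbit u n = false) by (apply Nat.testbit_false; rewrite Hsmall; reflexivity).
  congruence.
Qed.

Fixpoint low_ones (k u : nat) : bool :=
  andb (Nat.odd u) (match k with 0 => true | S k' => low_ones k' (Nat.div2 u) end).

Fixpoint run_below (k N u : nat) : bool :=
  match N with 0 => false | S N' => orb (low_ones k u) (run_below k N' (Nat.div2 u)) end.

Lemma low_ones_double (k v : nat) : low_ones k (2 * v) = false.
Proof. destruct k; cbn [low_ones]; rewrite odd_double; reflexivity. Qed.

Lemma low_ones_testbit (k u : nat) :
  (forall j, j <= k -> Nat.testbit u j = true) -> low_ones k u = true.
Proof.
  revert u; induction k as [|k IH]; intros u Hbits; cbn [low_ones];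
    rewrite <- Nat.bit0_odd, (Hbits 0) by lia; [reflexivity|].
  apply IH; intros j Hj; rewrite Nat.testbit_div2; apply Hbits; lia.
Qed.

Lemma run_below_testbit (i k N u : nat) : i + k < N ->
  (forall j, j <= k -> Nat.testbit u (i + j) = true) -> run_below k N u = true.
Proof.
  revert N u; induction i as [|i IH]; intros [|N] u HN Hbits; try lia; cbn [run_below].
  - rewrite low_ones_testbit; auto.
  - rewrite (IH N); [apply Bool.orb_true_r | lia |].
    intros j Hj; rewrite Nat.testbit_div2; apply (Hbits j Hj).
Qed.

Lemma count_low_ones (k M : nat) :
  length (filter (low_ones k) (seq 0 (2 ^ M))) * 2 ^ S k <= 2 ^ M.
Proof.
  revert k; induction M as [|M IH]; intros k.
  - destruct k; simpl; lia.
  - rewrite Nat.pow_succ_r', length_filter_seq_double,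
      length_filter_false, Nat.add_0_l by apply low_ones_double.
    destruct k as [|k].
    + pose proof (filter_length_le (fun v => low_ones 0 (2 * v + 1)) (seq 0 (2 ^ M))).
      rewrite length_seq, Nat.pow_1_r in *; lia.
    + rewrite (filter_ext (fun v => low_ones (S k) (2 * v + 1)) (low_ones k))
        by (intros v; cbn [low_ones];
            rewrite odd_double_succ, div2_double_succ; reflexivity).
      specialize (IH k); rewrite Nat.pow_succ_r'; lia.
Qed.

Lemma count_low_ones_odd (k N : nat) :
  length (filter (fun v => low_ones k (2 * v + 1)) (seq 0 (2 ^ N))) * 2 ^ S k
    <= 2 * 2 ^ N.
Proof.
  pose proof (count_low_ones k (S N)) as Hcount.
  rewrite Nat.pow_succ_r', length_filter_seq_double, length_filter_false in Hcount
    by apply low_ones_double.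
  exact Hcount.
Qed.

Lemma count_run_below (k N : nat) :
  length (filter (run_below k N) (seq 0 (2 ^ N))) * 2 ^ S k <= N * 2 ^ N.
Proof.
  induction N as [|N IH]; [simpl; lia|].
  rewrite Nat.pow_succ_r', length_filter_seq_double.
  rewrite (filter_ext (fun v => run_below k (S N) (2 * v)) (run_below k N))
    by (intros v; cbn [run_below];
        rewrite low_ones_double, Nat.div2_double; reflexivity).
  rewrite (filter_ext (fun v => run_below k (S N) (2 * v + 1))
             (fun v => orb (low_ones k (2 * v + 1)) (run_below k N v)))
    by (intros v; cbn [run_below];
        rewrite div2_double_succ; reflexivity).
  pose proof (length_filter_orb (fun v => low_ones k (2 * v + 1)) (run_below k N)
                (seq 0 (2 ^ N))) as Horb.
  pose proof (count_low_ones_odd k N).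
  nia.
Qed.

Lemma sum_map_neq0 (f : nat -> nat) (l : list nat) :
  fold_right Nat.add 0 (map f l) <> 0 -> exists x, In x l /\ f x <> 0.
Proof.
  induction l as [|a l IH]; simpl; intros Hsum; [lia|].
  destruct (Nat.eq_dec (f a) 0) as [Ha|Ha]; [|eauto].
  destruct IH as [x [Hx Hfx]]; [lia|eauto].
Qed.

Lemma prod_map_neq0 (f : nat -> nat) (l : list nat) :
  fold_right Nat.mul 1 (map f l) <> 0 -> forall x, In x l -> f x <> 0.
Proof.
  induction l as [|a l IH]; simpl; intros Hprod x Hx; [contradiction|].
  apply Nat.neq_mul_0 in Hprod as [Ha Hl].
  destruct Hx as [<-|Hx]; auto.
Qed.

Lemma run_prod_neq0 (k i u : nat) :
  run_prod k i u <> 0 -> forall j, j <= k -> Nat.testbit u (i + j) = true.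
Proof.
  intros Hprod j Hj.
  assert (Hin : In j (seq 0 (S k))) by (apply in_seq; lia).
  pose proof (prod_map_neq0 _ _ Hprod j Hin) as Hbit.
  unfold eps in Hbit; destruct (Nat.testbit u (i + j)); [reflexivity|].
  contradiction.
Qed.

Lemma run_below_odd_run_count (k N u : nat) :
  u < 2 ^ N -> Nat.odd (run_count k u) = true -> run_below k N u = true.
Proof.
  intros Hu Hodd.
  assert (Hcount : run_count k u <> 0) by (intros E; rewrite E in Hodd; discriminate).
  destruct (sum_map_neq0 _ _ Hcount) as [i [_ Hi]].
  pose proof (run_prod_neq0 k i u Hi) as Hbits.
  apply (run_below_testbit i); [|exact Hbits].
  apply (testbit_lt_pow2 u N (i + k) Hu), Hbits, le_n.
Qed.

Lemma I_count_le (k N : nat) : I_count k N * 2 ^ S k <= N * 2 ^ N.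
Proof.
  enough (I_count k N <= length (filter (run_below k N) (seq 0 (2 ^ N))))
    by (pose proof (count_run_below k N); nia).
  apply length_filter_incl; intros u Hu Hodd.
  apply in_seq in Hu; apply run_below_odd_run_count; [lia | exact Hodd].
Qed.

Lemma E_count_add_I_count (k N : nat) : E_count k N + I_count k N = 2 ^ N.
Proof.
  unfold E_count, I_count; rewrite <- (length_seq (2 ^ N) 0) at 3.
  induction (seq 0 (2 ^ N)) as [|u l IH]; simpl; [reflexivity|].
  rewrite <- Nat.negb_even; destruct (Nat.even (run_count k u)); simpl; lia.
Qed.

Open Scope R_scope.

Lemma Rpower_le_pow2 (A : R) (n k : nat) :
  INR k >= A * ln (INR n) / ln 2 -> Rpower (INR n) A <= INR (2 ^ k).
Proof.
  intros Hk.
  assert (Hln2 : 0 < ln 2) by (rewrite <- ln_1; apply ln_increasing; lra).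
  assert (Hexp : A * ln (INR n) <= INR k * ln 2).
  { apply Rge_le in Hk; apply (Rmult_le_compat_r (ln 2)) in Hk; [|lra].
    unfold Rdiv in Hk; rewrite Rmult_assoc, Rinv_l in Hk by lra; lra. }
  rewrite pow_INR, <- Rpower_pow by (simpl; lra).
  unfold Rpower; simpl INR.
  destruct (Rle_lt_or_eq_dec _ _ Hexp) as [Hlt|Heq];
    [left; apply exp_increasing, Hlt | rewrite Heq; right; reflexivity].
Qed.

Lemma I_count_ratio_le (A : R) (N k : nat) : (1 <= N)%nat ->
  INR k >= A * ln (INR N) / ln 2 ->
  INR (I_count k N) / INR (2 ^ N) <= Rpower (INR N) (1 - A) / 2.
Proof.
  intros HN Hk.
  assert (Hn : 0 < INR N) by (apply lt_0_INR; lia).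
  assert (H2N : 0 < INR (2 ^ N)) by (apply lt_0_INR, Nat.neq_0_lt_0, Nat.pow_nonzero; lia).
  assert (H2k : 0 < INR (2 ^ k)) by (apply lt_0_INR, Nat.neq_0_lt_0, Nat.pow_nonzero; lia).
  assert (HNA : 0 < Rpower (INR N) A) by apply exp_pos.
  assert (Hsplit : INR N = Rpower (INR N) (1 - A) * Rpower (INR N) A)
    by (rewrite <- Rpower_plus; replace (1 - A + A) with 1 by ring;
        rewrite Rpower_1; [reflexivity | exact Hn]).
  pose proof (Rpower_le_pow2 A N k Hk) as Hpow.
  pose proof (I_count_le k N) as HI; apply le_INR in HI.
  rewrite !mult_INR, Nat.pow_succ_r', mult_INR in HI; simpl INR in HI.
  assert (Hr : 0 < Rpower (INR N) (1 - A)) by apply exp_pos.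
  assert (HNk : INR N <= Rpower (INR N) (1 - A) * INR (2 ^ k))
    by (rewrite Hsplit at 1; apply Rmult_le_compat_l; lra).
  apply (Rmult_le_reg_r (2 * INR (2 ^ k) * INR (2 ^ N))); [nra|].
  replace (INR (I_count k N) / INR (2 ^ N) * (2 * INR (2 ^ k) * INR (2 ^ N)))
    with (INR (I_count k N) * ((1 + 1) * INR (2 ^ k))) by (field; lra).
  replace (Rpower (INR N) (1 - A) / 2 * (2 * INR (2 ^ k) * INR (2 ^ N)))
    with (Rpower (INR N) (1 - A) * INR (2 ^ k) * INR (2 ^ N)) by field.
  apply (Rle_trans _ _ _ HI), Rmult_le_compat_r; lra.
Qed.

Theorem mainTheorem14 :
  forall A : R, 1 < A ->
  forall eps0 : R, 0 < eps0 ->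
  exists N0 : nat, forall N k : nat,
    (2 <= N)%nat -> (N0 <= N)%nat -> (1 <= k)%nat ->
    INR k >= A * ln (INR N) / ln 2 ->
    INR (E_count k N) / INR (2 ^ N)
      >= 1 - 2 * Rpower (INR N) (1 - A) - eps0 * Rpower (INR N) (1 - A) /\
    INR (I_count k N) / INR (2 ^ N)
      <= 2 * Rpower (INR N) (1 - A) + eps0 * Rpower (INR N) (1 - A).
Proof.
  intros A _ eps0 Heps0; exists 0%nat; intros N k HN _ _ Hk.
  pose proof (I_count_ratio_le A N k ltac:(lia) Hk) as HI.
  assert (Hr : 0 < Rpower (INR N) (1 - A)) by apply exp_pos.
  assert (HE : INR (E_count k N) / INR (2 ^ N) = 1 - INR (I_count k N) / INR (2 ^ N)).
  { rewrite <- (E_count_add_I_count k N), plus_INR; field.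
    rewrite <- plus_INR, E_count_add_I_count; apply not_0_INR, Nat.pow_nonzero; lia. }
  assert (0 < eps0 * Rpower (INR N) (1 - A)) by (apply Rmult_lt_0_compat; assumption).
  split; lra.
Qed.
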